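(* Let $D:A\to\mathbf{qPOS}$ be a small diagram with $D(\alpha)=(\mathcal X_\alpha,R_\alpha)$. Let $\mathcal X$ with maps $J_\alpha:\mathcal X\to\mathcal X_\alpha$ be a limit in $\mathbf{qSet}$ of the underlying diagram of quantum sets. Then $R=\bigwedge_{\alpha\in A}J_\alpha^\dagger\circ R_\alpha\circ J_\alpha$ is a partial order on $\mathcal X$ (i.e. $(\mathcal X,R)$ is a quantum poset), and $(\mathcal X,R)$ together with the maps $J_\alpha$ is a limit of $D$ in $\mathbf{qPOS}$.
   Context: A quantum set $\mathcal X$ is a set $\mathrm{At}(\mathcal X)$ of nonzero finite-dimensional Hilbert spaces (atoms). A relation $R$ from $\mathcal X$ to $\mathcal Y$ is a choice of subspaces $R(X,Y)\subseteq L(X,Y)$ for all atoms. Composition: $(S\circ R)(X,Z)=\mathrm{span}\{sr: r\in R(X,Y), s\in S(Y,Z), Y\in\mathrm{At}(\mathcal Y)\}$; identity $I_{\mathcal X}(X,X)=\mathbb C 1_X$ and $0$ off the diagonal; adjoint $R^\dagger(Y,X)=\{r^\dagger: r\in R(X,Y)\}$; $R\le S$ entrywise inclusion; $\bigwedge$ entrywise intersection. A function $F:\mathcal X\to\mathcal Y$ is a relation with $F\circ F^\dagger\le I_{\mathcal Y}$ and $F^\dagger\circ F\ge I_{\mathcal X}$; quantum sets and functions form $\mathbf{qSet}$ (which is complete). A quantum poset is $(\mathcal X,R)$ with $I_{\mathcal X}\le R$, $R\circ R\le R$, $R\wedge R^\dagger\le I_{\mathcal X}$; a monotone map $F:(\mathcal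 X,R)\to(\mathcal Y,S)$ is a function with $F\circ R\le S\circ F$; these form $\mathbf{qPOS}$. *)

From HB Require Import structures.
From mathcomp Require Import all_boot all_algebra.
From mathcomp Require Import complex.
From mathcomp Require Import reals.

Set Implicit Arguments.
Unset Strict Implicit.
Unset Printing Implicit Defensive.

Import GRing.Theory.
Local Open Scope ring_scope.

(* A quantum set: a set of atoms, each atom being the nonzero finite-dimensional
   Hilbert space C^(dim x). *)
Record qset := QSet {
  atom : Type;
  dim : atom -> nat;
  dim_gt0 : forall x, (0 < dim x)%N
}.

Section QuantumSets.
Variable R : realType.
Local Notation C := (R[i]).

(* L(X, Y) for atoms x, y is 'M[C]_(dim y, dim x). *)
Definition qrel (X Y : qset) :=
  forall (x : atom X) (y : atom Y), 'M[C]_(dim y, dim x) -> Prop.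

Definition is_subspace (m n : nat) (S : 'M[C]_(m, n) -> Prop) :=
  S 0 /\ forall (a : C) u v, S u -> S v -> S (a *: u + v).

Definition is_qrel (X Y : qset) (Rl : qrel X Y) :=
  forall x y, is_subspace (Rl x y).

(* composition: (S o R)(x,z) = span { s r : r in R(x,y), s in S(y,z), y atom } *)
Definition qcomp (X Y Z : qset) (S : qrel Y Z) (Rl : qrel X Y) : qrel X Z :=
  fun x z M =>
    exists s : seq {y : atom Y & (C * 'M[C]_(dim y, dim x) * 'M[C]_(dim z, dim y))%type},
      foldr (fun t P => (Rl x (projT1 t) (projT2 t).1.2 /\
                         S (projT1 t) z (projT2 t).2) /\ P) True s /\
      M = \sum_(t <- s) ((projT2 t).1.1 *: ((projT2 t).2 *m (projT2 t).1.2)).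

Definition qid (X : qset) : qrel X X :=
  fun x x' M => M = 0 \/
    exists (e : x = x') (c : C), M = castmx (congr1 (@dim X) e, erefl) (c%:M).

Definition adjmx (m n : nat) (M : 'M[C]_(m, n)) : 'M[C]_(n, m) :=
  (map_mx conjc M)^T.

Definition qdag (X Y : qset) (Rl : qrel X Y) : qrel Y X :=
  fun y x M => exists N, Rl x y N /\ M = adjmx N.

Definition qle (X Y : qset) (Rl S : qrel X Y) :=
  forall x y M, Rl x y M -> S x y M.

Definition qmeet2 (X Y : qset) (Rl S : qrel X Y) : qrel X Y :=
  fun x y M => Rl x y M /\ S x y M.

Definition qbigmeet (I : Type) (X Y : qset) (F : I -> qrel X Y) : qrel X Y :=
  fun x y M => forall i, F i x y M.

Definition is_qfun (X Y : qset) (F : qrel X Y) :=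
  is_qrel F /\ qle (qcomp F (qdag F)) (@qid Y) /\ qle (@qid X) (qcomp (qdag F) F).

Definition is_qposet (X : qset) (Rl : qrel X X) :=
  is_qrel Rl /\ qle (@qid X) Rl /\ qle (qcomp Rl Rl) Rl /\
  qle (qmeet2 Rl (qdag Rl)) (@qid X).

Definition is_monotone (X Y : qset) (Rl : qrel X X) (S : qrel Y Y) (F : qrel X Y) :=
  is_qfun F /\ qle (qcomp F Rl) (qcomp S F).

End QuantumSets.

Unset Implicit Arguments.

Record smallcat := SmallCat {
  obj : Type;
  hom : obj -> obj -> Type;
  cid : forall a, hom a a;
  ccomp : forall a b c, hom b c -> hom a b -> hom a c;
  ccompA : forall a b c d (h : hom c d) (g : hom b c) (f : hom a b),
      ccomp a c d h (ccomp a b c g f) = ccomp a b d (ccomp b c d h g) f;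
  ccomp1l : forall a b (f : hom a b), ccomp a b b (cid b) f = f;
  ccomp1r : forall a b (f : hom a b), ccomp a a b f (cid a) = f
}.

Arguments hom {s} a b.
Arguments cid {s} a.
Arguments ccomp {s a b c} g f.

Record qpos_diagram (R : realType) (A : smallcat) := QPosDiagram {
  dobj : obj A -> qset;
  drel : forall a, qrel R (dobj a) (dobj a);
  dmor : forall a b, hom a b -> qrel R (dobj a) (dobj b);
  drel_po : forall a : obj A, @is_qposet R (dobj a) (drel a);
  dmor_mono : forall (a b : obj A) (f : hom a b), @is_monotone R (dobj a) (dobj b) (drel a) (drel b) (dmor a b f);
  dmor_id : forall a : obj A, dmor a a (cid a) = @qid R (dobj a);
  dmor_comp : forall a b c (g : hom b c) (f : hom a b),
      dmor a c (ccomp g f) = @qcomp R (dobj a) (dobj b) (dobj c) (dmor b c g) (dmor a b f)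
}.

Arguments dobj {R A} q a.
Arguments drel {R A} q a.
Arguments dmor {R A} q {a b} f.

Set Implicit Arguments.

Section Limits.
Variables (R : realType) (A : smallcat) (D : qpos_diagram R A).

Definition is_qset_cone (W : qset) (K : forall a, qrel R W (dobj D a)) :=
  (forall a, is_qfun (K a)) /\
  (forall a b (f : hom a b), qcomp (dmor D f) (K a) = K b).

Definition is_qset_limit (X : qset) (J : forall a, qrel R X (dobj D a)) :=
  is_qset_cone J /\
  forall (W : qset) (K : forall a, qrel R W (dobj D a)), is_qset_cone K ->
    exists K0 : qrel R W X,
      [/\ is_qfun K0, (forall a, qcomp (J a) K0 = K a) &
          forall K1 : qrel R W X, is_qfun K1 ->
            (forall a, qcomp (J a) K1 = K a) -> K1 = K0].

Definition is_qpos_cone (W : qset) (T : qrel R W W)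
    (K : forall a, qrel R W (dobj D a)) :=
  (forall a, is_monotone T (drel D a) (K a)) /\
  (forall a b (f : hom a b), qcomp (dmor D f) (K a) = K b).

Definition is_qpos_limit (X : qset) (Rl : qrel R X X)
    (J : forall a, qrel R X (dobj D a)) :=
  is_qposet Rl /\ is_qpos_cone Rl J /\
  forall (W : qset) (T : qrel R W W) (K : forall a, qrel R W (dobj D a)),
    is_qposet T -> is_qpos_cone T K ->
    exists K0 : qrel R W X,
      [/\ is_monotone T Rl K0, (forall a, qcomp (J a) K0 = K a) &
          forall K1 : qrel R W X, is_monotone T Rl K1 ->
            (forall a, qcomp (J a) K1 = K a) -> K1 = K0].

End Limits.

From Pilot Require Import Defs.
From mathcomp Require Import all_boot all_algebra.
From mathcomp Require Import complex reals.
From Stdlib Require Import ProofIrrelevance FunctionalExtensionality.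
From Stdlib Require Import PropExtensionality ClassicalEpsilon.

(* 1. We develop the calculus of quantum relations: composition is described by
      its generators s r (lemmas [qcomp_gen], [qcomp_ind]); it is associative,
      unital and monotone; the adjoint is an involutive contravariant functor;
      and a function F satisfies G <= F^† F G and F F^† G <= G (and duals).
   2. The heart of the proof is that a limit cone is jointly faithful:
      /\_a J_a^† J_a <= I_X ([limit_faithful]).  The left-hand side E is closed
      under composition and adjoints and contains the identities.  If T lies in
      E(x,x') with T T^† and T^† T nonzero scalars, the relation sending x to x'
      along T and fixing all other atoms is a function K with J_a K = J_a, so
      K = I by uniqueness in the limit property, whence T lies in I(x,x').  A
      matrix lemma ([star_subalgebra_scalar], via the Cayley transform) then
      forces E(z,z) to consist of scalars, and the general case follows.
   3. Reflexivity and transitivity of R are inherited from the R_a;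
      antisymmetry reduces through 2 to antisymmetry of the R_a; finally the
      mediating function of the qSet limit is monotone, which gives the qPOS
      limit property. *)

Set Implicit Arguments.
Unset Strict Implicit.
Unset Printing Implicit Defensive.
Import GRing.Theory Num.Theory.
Local Open Scope ring_scope.
Local Notation dim := Defs.dim.

Section Relations.
Variable R : realType.
Local Notation C := (R[i]).

Section Subspaces.
Variables (m n : nat) (P : 'M[C]_(m, n) -> Prop).
Hypothesis sP : is_subspace P.

Lemma subspace0 : P 0.
Proof. by case: sP. Qed.

Lemma subspaceZ a u : P u -> P (a *: u).
Proof. by case: sP => P0 PD Pu; rewrite -[a *: u]addr0; apply: PD. Qed.

Lemma subspaceD u v : P u -> P v -> P (u + v).
Proof. by case: sP => _ PD Pu Pv; rewrite -[u]scale1r; apply: PD. Qed.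

Lemma subspaceB u v : P u -> P v -> P (u - v).
Proof. by move=> Pu Pv; apply: subspaceD => //; rewrite -scaleN1r; apply: subspaceZ. Qed.

End Subspaces.

Definition summand (X Y Z : qset) (x : atom X) (z : atom Z) :=
  {y : atom Y & (C * 'M[C]_(dim y, dim x) * 'M[C]_(dim z, dim y))%type}.

Definition good_summand (X Y Z : qset) (S : qrel R Y Z) (Rl : qrel R X Y) x z
  (t : summand Y x z) := Rl x (projT1 t) (projT2 t).1.2 /\ S (projT1 t) z (projT2 t).2.

Lemma foldr_andP (T : Type) (Q : T -> Prop) (s : seq T) :
  foldr (fun t P => Q t /\ P) True s <-> List.Forall Q s.
Proof.
elim: s => [|t s IH] /=; first by split=> // _; constructor.
split; first by case=> Qt /IH; constructor.
by move=> H; inversion H; split => //; apply/IH.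
Qed.

Lemma qcompP (X Y Z : qset) (S : qrel R Y Z) (Rl : qrel R X Y) x z M :
  qcomp S Rl (x:=x) (y:=z) M <->
  exists s : seq (summand Y x z), List.Forall (good_summand S Rl (z:=z)) s /\
      M = \sum_(t <- s) ((projT2 t).1.1 *: ((projT2 t).2 *m (projT2 t).1.2)).
Proof.
by split; case=> s [H1 H2]; exists s; split => //; apply/foldr_andP.
Qed.

Lemma qcomp_gen (X Y Z : qset) (S : qrel R Y Z) (Rl : qrel R X Y) x y z r s :
  Rl x y r -> S y z s -> qcomp S Rl (s *m r).
Proof.
move=> Hr Hs; apply/qcompP.
exists [:: (existT _ y (1, r, s) : summand Y x z)]; split.
  by constructor => //; constructor.
by rewrite big_seq1 /= scale1r.
Qed.

Lemma qcomp_subspace (X Y Z : qset) (S : qrel R Y Z) (Rl : qrel R X Y) x z :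
  is_subspace (@qcomp R X Y Z S Rl x z).
Proof.
split.
  by apply/qcompP; exists [::]; split; [constructor | rewrite big_nil].
move=> a u v /qcompP [s1 [G1 ->]] /qcompP [s2 [G2 ->]]; apply/qcompP.
pose scale (t : summand Y x z) := (existT _ (projT1 t)
  (a * (projT2 t).1.1, (projT2 t).1.2, (projT2 t).2) : summand Y x z).
exists (map scale s1 ++ s2); split.
  apply/List.Forall_app; split => //.
  by apply/List.Forall_map; apply: List.Forall_impl G1; case=> y [[c r] s'].
rewrite big_cat big_map /= scaler_sumr; congr (_ + _).
by apply: eq_bigr => -[y [[c r] s']] _ /=; rewrite scalerA.
Qed.

Lemma qcomp_qrel (X Y Z : qset) (S : qrel R Y Z) (Rl : qrel R X Y) :
  is_qrel (qcomp S Rl).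
Proof. by move=> x z; apply: qcomp_subspace. Qed.

Lemma qcomp_ind (X Y Z : qset) (S : qrel R Y Z) (Rl : qrel R X Y) x z
    (P : 'M[C]_(dim z, dim x) -> Prop) :
  is_subspace P ->
  (forall y r s, Rl x y r -> S y z s -> P (s *m r)) ->
  forall M, qcomp S Rl (x:=x) (y:=z) M -> P M.
Proof.
move=> sP Pgen M /qcompP [s [G ->]].
elim: s G => [|t s IH] G; first by rewrite big_nil; apply: subspace0.
have [[Hr Hs] Gs] : good_summand S Rl t /\ List.Forall (good_summand S Rl (z:=z)) s.
  by inversion G.
rewrite big_cons; apply: subspaceD => //; last exact: IH.
by apply: subspaceZ => //; apply: Pgen.
Qed.

Lemma qle_trans (X Y : qset) (A B E : qrel R X Y) : qle A B -> qle B E -> qle A E.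
Proof. by move=> h1 h2 x y M /h1 /h2. Qed.

Lemma qrel_ext (X Y : qset) (A B : qrel R X Y) : qle A B -> qle B A -> A = B.
Proof.
move=> h1 h2; apply: functional_extensionality_dep => x.
apply: functional_extensionality_dep => y; apply: functional_extensionality => M.
by apply: propositional_extensionality; split; [apply: h1 | apply: h2].
Qed.

Lemma qcomp_mono (X Y Z : qset) (S S' : qrel R Y Z) (Rl Rl' : qrel R X Y) :
  qle S S' -> qle Rl Rl' -> qle (qcomp S Rl) (qcomp S' Rl').
Proof.
move=> hS hR x z; apply: qcomp_ind; first exact: qcomp_subspace.
by move=> y r s Hr Hs; apply: qcomp_gen; [apply: hR | apply: hS].
Qed.

Lemma qcomp_monol (X Y Z : qset) (S S' : qrel R Y Z) (Rl : qrel R X Y) :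
  qle S S' -> qle (qcomp S Rl) (qcomp S' Rl).
Proof. by move=> h; apply: qcomp_mono. Qed.

Lemma qcomp_monor (X Y Z : qset) (S : qrel R Y Z) (Rl Rl' : qrel R X Y) :
  qle Rl Rl' -> qle (qcomp S Rl) (qcomp S Rl').
Proof. by move=> h; apply: qcomp_mono. Qed.

Lemma subspace_mull m n p (P : 'M[C]_(m, p) -> Prop) (a : 'M[C]_(m, n)) :
  is_subspace P -> is_subspace (fun u : 'M[C]_(n, p) => P (a *m u)).
Proof.
move=> sP; split; first by rewrite mulmx0; apply: subspace0.
by move=> c u v Pu Pv; rewrite mulmxDr -scalemxAr; apply: sP.2.
Qed.

Lemma subspace_mulr m n p (P : 'M[C]_(m, p) -> Prop) (b : 'M[C]_(n, p)) :
  is_subspace P -> is_subspace (fun u : 'M[C]_(m, n) => P (u *m b)).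
Proof.
move=> sP; split; first by rewrite mul0mx; apply: subspace0.
by move=> c u v Pu Pv; rewrite mulmxDl -scalemxAl; apply: sP.2.
Qed.

Lemma qcompA (W X Y Z : qset) (A : qrel R Y Z) (B : qrel R X Y) (E : qrel R W X) :
  qcomp A (qcomp B E) = qcomp (qcomp A B) E.
Proof.
apply: qrel_ext => w z.
  apply: qcomp_ind; first exact: qcomp_subspace.
  move=> y r s Hr Hs; move: r Hr; apply: qcomp_ind.
    exact: subspace_mull (qcomp_subspace _ _ _ _).
  move=> x r' s' Hr' Hs'; rewrite mulmxA.
  by apply: qcomp_gen => //; apply: qcomp_gen.
apply: qcomp_ind; first exact: qcomp_subspace.
move=> x r s Hr Hs; move: s Hs; apply: qcomp_ind.
  exact: subspace_mulr (qcomp_subspace _ _ _ _).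
move=> y r' s' Hr' Hs'; rewrite -mulmxA.
by apply: qcomp_gen => //; apply: qcomp_gen.
Qed.

Lemma qid_scalar (X : qset) (x : atom X) (c : C) : @qid R _ x x c%:M.
Proof. by right; exists erefl, c; rewrite castmx_id. Qed.

Lemma qid_qrel (X : qset) : is_qrel (@qid R X).
Proof.
move=> x y; split; first by left.
move=> a u v; case=> [->|[e [c ->]]]; case=> [->|[e' [c' ->]]]; clear u v.
- by left; rewrite scaler0 addr0.
- by right; exists e', c'; rewrite scaler0 add0r.
- right; exists e, (a * c); rewrite addr0.
  by case: y / e; rewrite !castmx_id scale_scalar_mx.
- right; exists e, (a * c + c'); rewrite (proof_irrelevance _ e' e); clear e'.
  by case: y / e; rewrite !castmx_id scale_scalar_mx raddfD.
Qed.

Lemma qcomp_id_r (X Y : qset) (Rl : qrel R X Y) : is_qrel Rl -> qcomp Rl (@qid R X) = Rl.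
Proof.
move=> HR; apply: qrel_ext => x z.
  apply: qcomp_ind; first exact: HR.
  move=> y r s Hr Hs; case: Hr => [->|[e [c ->]]].
    by rewrite mulmx0; apply: subspace0.
  clear r; case: y / e s Hs => s Hs; rewrite castmx_id mul_mx_scalar.
  exact: subspaceZ.
by move=> M HM; rewrite -[M]mulmx1; apply: qcomp_gen => //; apply: qid_scalar.
Qed.

Lemma qcomp_id_l (X Y : qset) (Rl : qrel R X Y) : is_qrel Rl -> qcomp (@qid R Y) Rl = Rl.
Proof.
move=> HR; apply: qrel_ext => x z.
  apply: qcomp_ind; first exact: HR.
  move=> y r s Hr Hs; case: Hs => [->|[e [c ->]]].
    by rewrite mul0mx; apply: subspace0.
  clear s; case: z / e; rewrite castmx_id mul_scalar_mx.
  exact: subspaceZ.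
by move=> M HM; rewrite -[M]mul1mx; apply: qcomp_gen => //; apply: qid_scalar.
Qed.

Lemma adjmxK m n (M : 'M[C]_(m, n)) : adjmx (adjmx M) = M.
Proof. by apply/matrixP => i j; rewrite !mxE conjcK. Qed.

Lemma adjmx_mul m n p (A : 'M[C]_(m, n)) (B : 'M[C]_(n, p)) :
  adjmx (A *m B) = adjmx B *m adjmx A.
Proof. by rewrite /adjmx map_mxM trmx_mul. Qed.

Lemma adjmx_lin m n (a : C) (u v : 'M[C]_(m, n)) :
  adjmx (a *: u + v) = conjc a *: adjmx u + adjmx v.
Proof. by apply/matrixP => i j; rewrite !mxE rmorphD rmorphM. Qed.

Lemma adjmx0 m n : adjmx (0 : 'M[C]_(m, n)) = 0.
Proof. by apply/matrixP => i j; rewrite !mxE rmorph0. Qed.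

Lemma adjmxZ m n (a : C) (u : 'M[C]_(m, n)) : adjmx (a *: u) = conjc a *: adjmx u.
Proof. by rewrite -[a *: u]addr0 adjmx_lin adjmx0 addr0. Qed.

Lemma adjmxD m n (u v : 'M[C]_(m, n)) : adjmx (u + v) = adjmx u + adjmx v.
Proof. by rewrite -[u]scale1r adjmx_lin rmorph1 !scale1r. Qed.

Lemma adjmxN m n (u : 'M[C]_(m, n)) : adjmx (- u) = - adjmx u.
Proof. by rewrite -scaleN1r adjmxZ rmorphN rmorph1 scaleN1r. Qed.

Lemma adjmx_scalar n (c : C) : adjmx (c%:M : 'M[C]_n) = (conjc c)%:M.
Proof. by apply/matrixP => i j; rewrite !mxE rmorphMn eq_sym. Qed.

Lemma adjmx1 n : adjmx (1%:M : 'M[C]_n) = 1%:M.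
Proof. by rewrite adjmx_scalar rmorph1. Qed.

Lemma qdag_qrel (X Y : qset) (Rl : qrel R X Y) : is_qrel Rl -> is_qrel (qdag Rl).
Proof.
move=> HR y x; split; first by exists 0; rewrite adjmx0; split=> //; apply: subspace0.
move=> a _ _ [u [Hu ->]] [v [Hv ->]]; exists (conjc a *: u + v); split.
  exact: (HR x y).2.
by rewrite adjmx_lin conjcK.
Qed.

Lemma qdagK (X Y : qset) (Rl : qrel R X Y) : qdag (qdag Rl) = Rl.
Proof.
apply: qrel_ext => x y M.
  by case=> N [[P [HP ->]] ->]; rewrite adjmxK.
by move=> HM; exists (adjmx M); split; [exists M | rewrite adjmxK].
Qed.

Lemma qdag_comp (X Y Z : qset) (S : qrel R Y Z) (Rl : qrel R X Y) :
  qdag (qcomp S Rl) = qcomp (qdag Rl) (qdag S).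
Proof.
apply: qrel_ext => z x.
  move=> M [N [HN ->]]; move: N HN; apply: qcomp_ind.
    split; first by rewrite adjmx0; apply: subspace0; apply: qcomp_subspace.
    move=> a u v Hu Hv; rewrite adjmx_lin; exact: (qcomp_subspace _ _ _ _).2.
  move=> y r s Hr Hs; rewrite adjmx_mul; apply: qcomp_gen.
    by exists s.
  by exists r.
apply: qcomp_ind; first by apply: qdag_qrel; apply: qcomp_qrel.
move=> y _ _ [s [Hs ->]] [r [Hr ->]]; exists (s *m r); split.
  exact: qcomp_gen.
by rewrite adjmx_mul.
Qed.

Lemma qdag_id (X : qset) : qdag (@qid R X) = @qid R X.
Proof.
have qid_adj x y (M : 'M[C]_(dim y, dim x)) : @qid R X x y M -> @qid R X y x (adjmx M).
  case=> [->|[e [c ->]]]; first by left; rewrite adjmx0.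
  clear M; case: y / e; right; exists erefl, (conjc c).
  by rewrite !castmx_id adjmx_scalar.
apply: qrel_ext => x y M; first by case=> N [/qid_adj HN ->].
by move=> HM; exists (adjmx M); split; [apply: qid_adj | rewrite adjmxK].
Qed.

Lemma qle_meet2 (X Y : qset) (Z P Q : qrel R X Y) :
  qle Z P -> qle Z Q -> qle Z (qmeet2 P Q).
Proof. by move=> h1 h2 x y M HM; split; [apply: h1 | apply: h2]. Qed.

Lemma qle_bigmeet (I : Type) (X Y : qset) (Z : qrel R X Y) (F : I -> qrel R X Y) :
  (forall i, qle Z (F i)) -> qle Z (qbigmeet F).
Proof. by move=> h x y M HM i; apply: h. Qed.

Lemma qbigmeet_le (I : Type) (X Y : qset) (F : I -> qrel R X Y) i :
  qle (qbigmeet F) (F i).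
Proof. by move=> x y M; apply. Qed.

Lemma qmeet2_qrel (X Y : qset) (P Q : qrel R X Y) :
  is_qrel P -> is_qrel Q -> is_qrel (qmeet2 P Q).
Proof.
move=> hP hQ x y; split.
  by split; [exact: subspace0 (hP x y) | exact: subspace0 (hQ x y)].
by move=> a u v [Pu Qu] [Pv Qv]; split; [apply: (hP x y).2 | apply: (hQ x y).2].
Qed.

Lemma qbigmeet_qrel (I : Type) (X Y : qset) (F : I -> qrel R X Y) :
  (forall i, is_qrel (F i)) -> is_qrel (qbigmeet F).
Proof.
move=> hF x y; split; first by move=> i; exact: subspace0 (hF i x y).
by move=> a u v Hu Hv i; apply: (hF i x y).2.
Qed.

Section Functions.
Variables (X Y : qset) (F : qrel R X Y).
Hypothesis hF : is_qfun F.

Lemma qfun_qrel : is_qrel F.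
Proof. by case: hF. Qed.

Lemma qfun_unit : qle (@qid R X) (qcomp (qdag F) F).
Proof. by case: hF => _ []. Qed.

Lemma qfun_unitl (Z : qset) (G : qrel R Z X) :
  is_qrel G -> qle G (qcomp (qdag F) (qcomp F G)).
Proof.
move=> hG; rewrite qcompA -{1}(qcomp_id_l hG).
by apply: qcomp_monol; apply: qfun_unit.
Qed.

Lemma qfun_unitr (Z : qset) (G : qrel R X Z) :
  is_qrel G -> qle G (qcomp (qcomp G (qdag F)) F).
Proof.
move=> hG; rewrite -qcompA -{1}(qcomp_id_r hG).
by apply: qcomp_monor; apply: qfun_unit.
Qed.

Lemma qfun_counitl (W : qset) (G : qrel R W Y) :
  is_qrel G -> qle (qcomp F (qcomp (qdag F) G)) G.
Proof.
move=> hG; rewrite qcompA -{2}(qcomp_id_l hG).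
by apply: qcomp_monol; case: hF => _ [].
Qed.

Lemma qfun_counitr (W : qset) (G : qrel R Y W) :
  is_qrel G -> qle (qcomp (qcomp G F) (qdag F)) G.
Proof.
move=> hG; rewrite -qcompA -{2}(qcomp_id_r hG).
by apply: qcomp_monor; case: hF => _ [].
Qed.

End Functions.

Lemma qid_fun (X : qset) : is_qfun (@qid R X).
Proof.
split; first exact: qid_qrel.
by rewrite qdag_id qcomp_id_l; [split | apply: qid_qrel].
Qed.

End Relations.

Arguments qbigmeet_le {R I X Y} F i.

(* Linear algebra: a unital *-subalgebra of M_n(C) all of whose unitaries are
   scalar consists of scalars.  A hermitian h is recovered from its Cayley
   transform (h - i)(h + i)^-1, which is a unitary of the subalgebra, and
   every matrix is h1 + i h2 with h1, h2 hermitian. *)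
Section StarAlgebras.
Variable R : realType.
Local Notation C := (R[i]).
Local Notation ii := ('i%C : C).

Definition star_subalgebra n (P : 'M[C]_n -> Prop) :=
  [/\ is_subspace P, P 1%:M, (forall u v, P u -> P v -> P (u *m v))
    & forall u, P u -> P (adjmx u)].

Definition unitarymx n (u : 'M[C]_n) := u *m adjmx u = 1%:M /\ adjmx u *m u = 1%:M.

Lemma conji : conjc ii = - ii.
Proof. by apply/eqP; rewrite eq_complex /= oppr0 !eqxx. Qed.

Lemma ii_neq0 : ii != 0.
Proof.
apply/eqP => i0; have := sqr_i R; rewrite i0 expr0n /= => /eqP.
by rewrite eq_sym oppr_eq0 oner_eq0.
Qed.

Lemma ii_double_neq0 : ii + ii != 0.
Proof. by rewrite -mulr2n -mulr_natr mulf_eq0 negb_or ii_neq0 pnatr_eq0. Qed.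

Lemma mul_adjmx_eq0 m n (v : 'M[C]_(m, n)) : v *m adjmx v = 0 -> v = 0.
Proof.
move=> H; apply/matrixP => i j; rewrite mxE.
have := congr1 (fun M : 'M[C]_m => M i i) H; rewrite !mxE => /eqP.
rewrite psumr_eq0; last by move=> k _; rewrite !mxE; apply: mulcJ_ge0.
move/allP/(_ j (mem_index_enum _)); rewrite !mxE /= => /eqP.
by move/eqP; rewrite mulf_eq0 conjc_eq0 orbb => /eqP.
Qed.

Lemma hermitian_addi_unit n (h : 'M[C]_n) : adjmx h = h -> (h + ii%:M) \in unitmx.
Proof.
move=> hh; rewrite unitmxE unitfE; apply/negP => /det0P [v vn0 Hv].
have vh : v *m h = - (ii *: v).
  by apply/eqP; rewrite -subr_eq0 opprK -mul_mx_scalar -mulmxDr Hv.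
set s := v *m adjmx v.
have hs : adjmx s = s by rewrite /s adjmx_mul adjmxK.
have hw : adjmx (v *m h *m adjmx v) = v *m h *m adjmx v.
  by rewrite !adjmx_mul adjmxK hh mulmxA.
rewrite vh mulNmx -scalemxAl adjmxN adjmxZ conji hs -/s in hw.
have : (ii + ii) *: s = 0.
  by move: hw; rewrite scaleNr opprK scalerDl => {1}->; rewrite addNr.
move/eqP; rewrite scaler_eq0 (negPf ii_double_neq0) /=.
by move/eqP/mul_adjmx_eq0 => v0; rewrite v0 eqxx in vn0.
Qed.

(* By Cayley-Hamilton, the inverse of h is a polynomial in h. *)
Lemma invmx_subalgebra n (P : 'M[C]_n -> Prop) :
  is_subspace P -> P 1%:M -> (forall u v, P u -> P v -> P (u *m v)) ->
  forall h, P h -> h \in unitmx -> P (invmx h).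
Proof.
case: n P => [|n] P sP P1 PM h Ph hu.
  by rewrite [invmx h]flatmx0; apply: subspace0.
have Ppoly p : P (horner_mx h p).
  elim/poly_ind: p => [|p c IH]; first by rewrite rmorph0; apply: subspace0.
  rewrite rmorphD rmorphM /= horner_mx_X horner_mx_C.
  apply: subspaceD => //; first by rewrite -mulmxE; apply: PM.
  by rewrite -scalemx1; apply: subspaceZ.
have CH := Cayley_Hamilton h.
set p := char_poly h in CH.
have tk : take_poly 1 p = (p`_0)%:P.
  by apply/polyP => i; rewrite coef_take_poly coefC; case: i.
have := poly_take_drop 1 p; rewrite tk expr1 => Ep.
rewrite -Ep rmorphD rmorphM /= horner_mx_X horner_mx_C in CH.
set q := horner_mx h (drop_poly 1 p) in CH.
have p0 : p`_0 != 0.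
  by rewrite /p char_poly_det mulf_eq0 negb_or signr_eq0 /= -unitfE -unitmxE.
have : (p`_0)%:M *m invmx h + q *m h *m invmx h = 0.
  by rewrite -mulmxDl; move: CH; rewrite -mulmxE => ->; apply: mul0mx.
rewrite -mulmxA mulmxV // mulmx1 mul_scalar_mx => /eqP; rewrite addr_eq0 => /eqP E.
have -> : invmx h = - (p`_0)^-1 *: q.
  by rewrite scaleNr -scalerN -E scalerA mulVf // scale1r.
by apply: subspaceZ => //; apply: Ppoly.
Qed.

Lemma adjmx_invmx n (M : 'M[C]_n) : M \in unitmx ->
  adjmx M \in unitmx /\ adjmx (invmx M) = invmx (adjmx M).
Proof.
move=> Mu; have H : adjmx (invmx M) *m adjmx M = 1%:M.
  by rewrite -adjmx_mul mulmxV // adjmx1.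
have [_ Nu] := mulmx1_unit H; split => //.
by rewrite -[LHS]mulmx1 -(mulmxV Nu) mulmxA H mul1mx.
Qed.

Lemma invmx_comm n (M N : 'M[C]_n) : M \in unitmx -> M *m N = N *m M ->
  invmx M *m N = N *m invmx M.
Proof.
move=> Mu MN.
rewrite -[LHS]mulmx1 -(mulmxV Mu) !mulmxA -[invmx M *m N *m M]mulmxA -MN.
by rewrite !mulmxA mulVmx // mul1mx.
Qed.

Lemma cayley_unitary n (h : 'M[C]_n) : adjmx h = h ->
  unitarymx ((h - ii%:M) *m invmx (h + ii%:M)).
Proof.
move=> hh; set X := h + ii%:M; set Y := h - ii%:M.
have Xu : X \in unitmx by apply: hermitian_addi_unit.
have aX : adjmx X = Y by rewrite /X adjmxD hh adjmx_scalar conji /Y raddfN.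
have aY : adjmx Y = X by rewrite -aX adjmxK.
have [Yu aiX] := adjmx_invmx Xu; rewrite aX in Yu aiX.
have XY : X *m Y = Y *m X.
  rewrite /X /Y !mulmxDl !mulmxDr !mulNmx !mulmxN !mul_mx_scalar !mul_scalar_mx.
  by rewrite addrACA [- _ + _]addrC addrACA.
have uu : Y *m invmx X *m adjmx (Y *m invmx X) = 1%:M.
  rewrite adjmx_mul aiX aY !mulmxA -[Y *m invmx X *m invmx Y *m X]mulmxA.
  rewrite (invmx_comm Yu (esym XY)) !mulmxA -[Y *m invmx X *m X]mulmxA mulVmx //.
  by rewrite mulmx1 mulmxV.
by split => //; apply: mulmx1C.
Qed.

Section ScalarUnitaries.
Variables (n : nat) (P : 'M[C]_n -> Prop).
Hypotheses (n_gt0 : (0 < n)%N) (starP : star_subalgebra P).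
Hypothesis unitary_scalar : forall u, P u -> unitarymx u -> exists c, u = c%:M.

Lemma scalar_mx_eq0 (c : C) : (c%:M : 'M[C]_n) = 0 -> c = 0.
Proof.
by move=> /matrixP /(_ (Ordinal n_gt0) (Ordinal n_gt0)); rewrite !mxE eqxx mulr1n.
Qed.

(* From (h - i) = c (h + i) with c != 1 one solves for h. *)
Lemma hermitian_scalar h : P h -> adjmx h = h -> exists c, h = c%:M.
Proof.
case: starP => sP P1 PM _ Ph hh; set X := h + ii%:M; set Y := h - ii%:M.
have PX : P X by apply: subspaceD => //; rewrite -scalemx1; apply: subspaceZ.
have PY : P Y by apply: subspaceB => //; rewrite -scalemx1; apply: subspaceZ.
have Xu : X \in unitmx by apply: hermitian_addi_unit.
have [c Ec] := unitary_scalar (PM _ _ PY (invmx_subalgebra sP P1 PM PX Xu))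
  (cayley_unitary hh).
have EY : Y = c *: X by rewrite -mul_scalar_mx -Ec -mulmxA mulVmx // mulmx1.
have E2 : (1 - c) *: h = (c * ii + ii)%:M.
  move: EY; rewrite /Y /X scalerDr -!mul_scalar_mx -scalar_mxM => /eqP.
  rewrite subr_eq -addrA -raddfD /= addrC -subr_eq => /eqP <-.
  by rewrite !mul_scalar_mx scalerBl scale1r.
have [c1|c1] := eqVneq c 1.
  move: E2; rewrite c1 subrr scale0r mul1r => /esym /scalar_mx_eq0 /eqP.
  by rewrite (negPf ii_double_neq0).
exists ((1 - c)^-1 * (c * ii + ii)); rewrite scalar_mxM -E2 mul_scalar_mx.
by rewrite scalerA mulVf ?scale1r // subr_eq0 eq_sym.
Qed.

Lemma star_subalgebra_scalar m : P m -> exists c, m = c%:M.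
Proof.
have two_neq0 : (2%:R : C) != 0 by rewrite pnatr_eq0.
case: starP => sP _ _ PA Pm.
set h1 := 2%:R^-1 *: (m + adjmx m).
set h2 := (2%:R * ii)^-1 *: (m - adjmx m).
have [c1 E1] : exists c, h1 = c%:M.
  apply: hermitian_scalar.
    by apply: subspaceZ => //; apply: subspaceD => //; apply: PA.
  by rewrite /h1 adjmxZ adjmxD adjmxK rmorphV ?unitfE // rmorph_nat addrC.
have [c2 E2] : exists c, h2 = c%:M.
  apply: hermitian_scalar.
    by apply: subspaceZ => //; apply: subspaceB => //; apply: PA.
  rewrite /h2 adjmxZ adjmxD adjmxN adjmxK rmorphV ?unitfE ?mulf_neq0 ?ii_neq0 //.
  rewrite rmorphM rmorph_nat -[_ ii]/(conjc ii) conji.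
  by rewrite mulrN invrN scaleNr -scalerN opprB.
exists (c1 + ii * c2); rewrite raddfD /= scalar_mxM -E1 -E2 mul_scalar_mx /h1 /h2.
rewrite scalerA invfM mulrA mulrAC mulfV ?ii_neq0 // mul1r -scalerDr.
by rewrite addrACA subrr addr0 -mulr2n -(scaler_nat 2 m) scalerA mulVf // scale1r.
Qed.

End ScalarUnitaries.

End StarAlgebras.

Section AtomMaps.
Variables (R : realType) (X : qset) (s : atom X -> atom X).
Local Notation C := (R[i]).
Variables (U : forall w, 'M[C]_(dim (s w), dim w)) (ua ub : atom X -> C).
Hypotheses (hUa : forall w, U w *m adjmx (U w) = (ua w)%:M)
  (hUb : forall w, adjmx (U w) *m U w = (ub w)%:M) (hub : forall w, ub w != 0).

Definition atom_map_rel : qrel R X X := fun z y M =>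
  M = 0 \/ exists (e : s z = y) (c : C), M = c *: castmx (congr1 (@dim X) e, erefl) (U z).

Lemma atom_map_rel_gen z : atom_map_rel (x:=z) (y:=s z) (U z).
Proof. by right; exists erefl, 1; rewrite scale1r castmx_id. Qed.

Lemma atom_map_qrel : is_qrel atom_map_rel.
Proof.
move=> z y; split; first by left.
move=> a u v; case=> [->|[e [c ->]]]; case=> [->|[e' [c' ->]]]; clear u v.
- by left; rewrite scaler0 addr0.
- by right; exists e', c'; rewrite scaler0 add0r.
- by right; exists e, (a * c); rewrite addr0 scalerA.
- right; exists e, (a * c + c'); rewrite (proof_irrelevance _ e' e).
  by rewrite scalerA scalerDl.
Qed.

(* K K^† <= I because U U^† is scalar; I <= K^† K because U^† U = ub I with
   ub invertible. *)
Lemma atom_map_qfun : is_qfun atom_map_rel.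
Proof.
split; first exact: atom_map_qrel.
split.
  move=> y y'; apply: qcomp_ind; first exact: qid_qrel.
  move=> z _ k [r [Hr ->]] Hk.
  case: Hk => [->|[e1 [c1 ->]]]; first by rewrite mul0mx; left.
  case: Hr => [->|[e2 [c2 ->]]]; first by rewrite adjmx0 mulmx0; left.
  clear k r; case: y' / e1; case: y / e2; rewrite !castmx_id.
  by rewrite adjmxZ -scalemxAl -scalemxAr hUa !scale_scalar_mx; apply: qid_scalar.
move=> z z' M; case=> [->|[e [c ->]]].
  exact: subspace0 (qcomp_subspace _ _ z z').
clear M; case: z' / e; rewrite castmx_id.
have -> : c%:M = (c / ub z) *: adjmx (U z) *m U z.
  by rewrite -scalemxAl hUb scale_scalar_mx mulfVK.
apply: qcomp_gen; first exact: atom_map_rel_gen.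
exists ((conjc (c / ub z)) *: U z); split.
  by right; exists erefl, (conjc (c / ub z)); rewrite castmx_id.
by rewrite adjmxZ conjcK.
Qed.

End AtomMaps.

Section LimitFaithful.
Local Unset Implicit Arguments.
Variables (R : realType) (A : smallcat) (D : qpos_diagram R A).
Local Notation C := (R[i]).
Variables (X : qset) (J : forall a : obj A, qrel R X (dobj D a)).
Hypothesis Jlim : is_qset_limit J.

Lemma limit_qfun a : is_qfun (J a).
Proof. by case: Jlim => -[]. Qed.

Lemma limit_qrel a : is_qrel (J a).
Proof. exact: qfun_qrel (limit_qfun a). Qed.

Lemma limit_endo_id (K : qrel R X X) : is_qfun K ->
  (forall a, qcomp (J a) K = J a) -> K = @qid R X.
Proof.
move=> hK HK; case: (Jlim.2 X J Jlim.1) => K0 [_ _ uniq].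
rewrite (uniq K hK HK) (uniq (@qid R X)) //; first exact: qid_fun.
by move=> a; rewrite qcomp_id_r //; apply: limit_qrel.
Qed.

Definition limit_kernel : qrel R X X :=
  qbigmeet (fun a => qcomp (qdag (J a)) (J a)).

Lemma limit_kernel_qrel : is_qrel limit_kernel.
Proof. by apply: qbigmeet_qrel => a; apply: qcomp_qrel. Qed.

(* The kernel is closed under products, since J_a J_a^† J_a <= J_a ... *)
Lemma limit_kernel_mul {x y z}
    {e : 'M[C]_(dim z, dim y)} {f : 'M[C]_(dim y, dim x)} :
  limit_kernel y z e -> limit_kernel x y f -> limit_kernel x z (e *m f).
Proof.
move=> He Hf a; apply: (qcomp_monor (qfun_counitl (limit_qfun a) (limit_qrel a))).
by rewrite qcompA; apply: qcomp_gen (Hf a) (He a).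
Qed.

(* ... under adjoints, since J_a^† J_a is self-adjoint ... *)
Lemma limit_kernel_adj {x x'} {e : 'M[C]_(dim x', dim x)} :
  limit_kernel x x' e -> limit_kernel x' x (adjmx e).
Proof.
move=> He a; rewrite -[qcomp _ _]qdagK qdag_comp qdagK.
by exists e; split => //; apply: He.
Qed.

(* ... and contains the identities, J_a being a function. *)
Lemma limit_kernel_1 x : limit_kernel x x 1%:M.
Proof. by move=> a; apply: qfun_unit (limit_qfun a) _ _ _ (qid_scalar _ _). Qed.

Lemma limit_kernel_J {a x x' b}
    {t : 'M[C]_(dim b, dim x')} {e : 'M[C]_(dim x', dim x)} :
  J a x' b t -> limit_kernel x x' e -> J a x b (t *m e).
Proof.
move=> Ht He; apply: (qfun_counitl (limit_qfun a) (limit_qrel a)).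
exact: qcomp_gen (He a) Ht.
Qed.

Lemma atom_map_qid (s : atom X -> atom X) (U : forall w, 'M[C]_(dim (s w), dim w))
    (ua ub : atom X -> C) :
  (forall w, U w *m adjmx (U w) = (ua w)%:M) ->
  (forall w, adjmx (U w) *m U w = (ub w)%:M) -> (forall w, ub w != 0) ->
  (forall w, limit_kernel w (s w) (U w)) ->
  forall w, @qid R X w (s w) (U w).
Proof.
move=> hUa hUb hub hUk w.
suff <- : atom_map_rel U = @qid R X by apply: atom_map_rel_gen.
apply: limit_endo_id; first exact: atom_map_qfun hUa hUb hub.
move=> a; apply: qrel_ext => z bb.
  apply: qcomp_ind; first exact: limit_qrel.
  move=> y r t Hr Ht; case: Hr => [->|[e [c ->]]].
    by rewrite mulmx0; apply: subspace0 (limit_qrel a z bb).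
  clear r; case: y / e t Ht => t Ht; rewrite castmx_id -scalemxAr.
  by apply: subspaceZ; [exact: limit_qrel | exact: limit_kernel_J Ht (hUk z)].
move=> t Ht.
have -> : t = (ub z)^-1 *: (t *m adjmx (U z)) *m U z.
  by rewrite -scalemxAl -mulmxA hUb mul_mx_scalar scalerA mulVf // scale1r.
apply: qcomp_gen; first exact: atom_map_rel_gen.
apply: subspaceZ; first exact: limit_qrel.
exact: limit_kernel_J Ht (limit_kernel_adj (hUk z)).
Qed.

(* An element T of the kernel at (x, x') with T T^† and T^† T nonzero scalars
   lies in I_X: redirect x to x' along T, fixing the other atoms. *)
Lemma limit_kernel_isometry_qid {x x' : atom X} {T : 'M[C]_(dim x', dim x)}
    {ta tb : C} :
  limit_kernel x x' T -> T *m adjmx T = ta%:M -> adjmx T *m T = tb%:M ->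
  tb != 0 -> @qid R X x x' T.
Proof.
move=> HT hTa hTb htb.
pose s w := match excluded_middle_informative (w = x) with
  left _ => x' | right _ => w end.
pose U w : 'M[C]_(dim (s w), dim w) :=
  match excluded_middle_informative (w = x) as d
    return 'M[C]_(dim (match d with left _ => x' | right _ => w end), dim w) with
  | left ew => castmx (erefl, congr1 (@dim X) (esym ew)) T
  | right _ => 1%:M end.
pose ua w := match excluded_middle_informative (w = x) with
  left _ => ta | right _ => 1 end.
pose ub w := match excluded_middle_informative (w = x) with
  left _ => tb | right _ => 1 end.
have hU w : [/\ U w *m adjmx (U w) = (ua w)%:M, adjmx (U w) *m U w = (ub w)%:M,
                ub w != 0 & limit_kernel w (s w) (U w)].
  rewrite /U /ua /ub /s; case: (excluded_middle_informative (w = x)) => [ew|_].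
    by subst w; rewrite castmx_id.
  by rewrite adjmx1 mulmx1 oner_neq0; split=> //; apply: limit_kernel_1.
suff : @qid R X x (s x) (U x).
  rewrite /s /U; case: (excluded_middle_informative (x = x)) => // ex.
  by rewrite (proof_irrelevance _ ex erefl) castmx_id.
by apply: (atom_map_qid s U ua ub) => w; case: (hU w).
Qed.

(* The diagonal kernel E(z, z) is a unital *-subalgebra whose unitaries are
   scalar, hence it consists of scalars. *)
Lemma limit_kernel_diag_scalar {z} {m : 'M[C]_(dim z)} :
  limit_kernel z z m -> exists c, m = c%:M.
Proof.
apply: (star_subalgebra_scalar (dim_gt0 z)).
  split; [exact: limit_kernel_qrel | exact: limit_kernel_1 |
    by move=> u v; apply: limit_kernel_mul | by move=> u; apply: limit_kernel_adj].
move=> u Hu [uu uu'].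
have [u0|[e [c ->]]] := limit_kernel_isometry_qid Hu uu uu' (oner_neq0 _).
  by exists 0; rewrite u0 raddf0.
by exists c; rewrite (proof_irrelevance _ e erefl) castmx_id.
Qed.

(* Joint faithfulness of a limit cone: /\_a J_a^† J_a <= I_X.  For M in the
   kernel, M^† M and M M^† lie in diagonal kernels, so they are scalars. *)
Lemma limit_faithful : qle limit_kernel (@qid R X).
Proof.
move=> x x' M HM; have [->|M0] := eqVneq M 0; first by left.
have [c Hc] := limit_kernel_diag_scalar (limit_kernel_mul (limit_kernel_adj HM) HM).
have [c' Hc'] := limit_kernel_diag_scalar (limit_kernel_mul HM (limit_kernel_adj HM)).
apply: (limit_kernel_isometry_qid HM Hc' Hc).
apply: contra_neq M0 => c0.
suff /(congr1 (@adjmx _ _ _)) : adjmx M = 0 by rewrite adjmxK adjmx0.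
by apply: mul_adjmx_eq0; rewrite adjmxK Hc c0 raddf0.
Qed.

End LimitFaithful.

Arguments limit_qfun {R A D X J} Jlim a.
Arguments limit_qrel {R A D X J} Jlim a.
Arguments limit_faithful {R A D X J} Jlim.

Section LimitOrder.
Local Unset Implicit Arguments.
Variables (R : realType) (A : smallcat) (D : qpos_diagram R A).
Variables (X : qset) (J : forall a : obj A, qrel R X (dobj D a)).
Hypothesis Jlim : is_qset_limit J.

Let Ra a := drel D a.
Let Ra_poset a : is_qposet (Ra a) := drel_po _ _ D a.

Lemma drel_qrel a : is_qrel (Ra a).
Proof. by case: (Ra_poset a). Qed.

Definition pullback_order a : qrel R X X := qcomp (qdag (J a)) (qcomp (Ra a) (J a)).

Definition limit_order : qrel R X X := qbigmeet pullback_order.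

Lemma limit_order_qrel : is_qrel limit_order.
Proof. by apply: qbigmeet_qrel => a; apply: (qcomp_qrel _ _). Qed.

Lemma limit_order_refl : qle (@qid R X) limit_order.
Proof.
apply: qle_bigmeet => a; apply: qle_trans (qfun_unit (limit_qfun Jlim a)) _.
apply: qcomp_monor; rewrite -{1}(qcomp_id_l (limit_qrel Jlim a)).
by apply: qcomp_monol; case: (Ra_poset a) => _ [].
Qed.

Lemma limit_order_trans : qle (qcomp limit_order limit_order) limit_order.
Proof.
apply: qle_bigmeet => a.
apply: qle_trans (qcomp_mono (qbigmeet_le _ a) (qbigmeet_le _ a)) _.
rewrite /pullback_order -!qcompA; apply: qcomp_monor.
apply: (qle_trans (B := qcomp (Ra a) (qcomp (Ra a) (J a)))).
  by apply: qcomp_monor; apply: (qfun_counitl (limit_qfun Jlim a) (qcomp_qrel _ _)).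
by rewrite qcompA; apply: qcomp_monol; case: (Ra_poset a) => _ [_ []].
Qed.

Lemma pushforward_pullback a (G : qrel R (dobj D a) (dobj D a)) : is_qrel G ->
  qle (qcomp (qcomp (J a) (qcomp (qdag (J a)) (qcomp G (J a)))) (qdag (J a))) G.
Proof.
move=> hG; apply: qle_trans _ (qfun_counitr (limit_qfun Jlim a) hG).
by apply: qcomp_monol; apply: (qfun_counitl (limit_qfun Jlim a) (qcomp_qrel _ _)).
Qed.

(* Antisymmetry: R /\ R^† <= J_a^† (R_a /\ R_a^†) J_a <= J_a^† J_a for every
   a, and the cone is jointly faithful. *)
Lemma limit_order_anti : qle (qmeet2 limit_order (qdag limit_order)) (@qid R X).
Proof.
move=> x x' M HM; apply: (limit_faithful Jlim) => a.
pose T := qmeet2 (pullback_order a) (qdag (pullback_order a)).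
have hT : is_qrel T by apply: qmeet2_qrel; [|apply: qdag_qrel]; apply: (qcomp_qrel _ _).
have HT : T x x' M.
  case: HM => H1 [N [H2 EM]]; split; first exact: (H1 a).
  by exists N; split => //; apply: (H2 a).
have hJ := limit_qfun Jlim a.
have push_le : qle (qcomp (qcomp (J a) T) (qdag (J a))) (@qid R (dobj D a)).
  have [_ [_ [_ anti]]] := Ra_poset a.
  apply: qle_trans _ anti; apply: qle_meet2.
    apply: qle_trans _ (pushforward_pullback a _ (drel_qrel a)).
    by apply: qcomp_monol; apply: qcomp_monor => ? ? ? [].
  apply: qle_trans _ (pushforward_pullback a _ (qdag_qrel (drel_qrel a))).
  apply: qcomp_monol; apply: qcomp_monor => ? ? ? [_].
  by rewrite /pullback_order !qdag_comp qdagK qcompA.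
suff T_le : qle T (qcomp (qdag (J a)) (J a)) by exact: T_le _ _ _ HT.
apply: qle_trans (qfun_unitl hJ hT) _; apply: qcomp_monor.
apply: qle_trans (qfun_unitr hJ (qcomp_qrel _ _)) _.
by rewrite -[X in qle _ X](qcomp_id_l (qfun_qrel hJ)); apply: qcomp_monol.
Qed.

Lemma limit_order_poset : is_qposet limit_order.
Proof.
split; first exact: limit_order_qrel.
split; first exact: limit_order_refl.
by split; [exact: limit_order_trans | exact: limit_order_anti].
Qed.

(* Each leg J_a is monotone: J_a R <= J_a J_a^† R_a J_a <= R_a J_a. *)
Lemma limit_leg_monotone a : is_monotone limit_order (Ra a) (J a).
Proof.
split; first exact: limit_qfun Jlim a.
apply: qle_trans (qcomp_monor (qbigmeet_le _ a)) _.
exact: (qfun_counitl (limit_qfun Jlim a) (qcomp_qrel _ _)).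
Qed.

(* The mediating function K0 of a monotone cone K is monotone:
   K0 T <= K0 T K0^† K0 and K0 T K0^† <= J_a^† R_a J_a for every a, because
   J_a K0 T K0^† <= R_a K_a K0^† = R_a J_a K0 K0^† <= R_a J_a. *)
Lemma limit_order_limit : is_qpos_limit limit_order J.
Proof.
split; first exact: limit_order_poset.
split; first by split; [exact: limit_leg_monotone | case: Jlim => -[]].
move=> W T K hT hK.
have hKf : is_qset_cone K by split; [move=> a; case: (hK.1 a) | exact: hK.2].
case: (Jlim.2 W K hKf) => K0 [hK0 HJ uniq].
exists K0; split => //; last by move=> K1 [hK1 _]; apply: uniq.
split => //.
apply: qle_trans (qfun_unitr hK0 (qcomp_qrel _ _)) _.
apply: qcomp_monol; apply: qle_bigmeet => a.
apply: qle_trans (qfun_unitl (limit_qfun Jlim a) (qcomp_qrel _ _)) _.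
apply: qcomp_monor; rewrite !qcompA HJ.
apply: (qle_trans (B := qcomp (qcomp (Ra a) (K a)) (qdag K0))).
  by apply: qcomp_monol; exact: (hK.1 a).2.
rewrite -HJ -qcompA; apply: qcomp_monor.
exact: (qfun_counitr hK0 (qfun_qrel (limit_qfun Jlim a))).
Qed.

End LimitOrder.

Theorem mainTheorem4 (R : realType) (A : smallcat) (D : qpos_diagram R A)
    (X : qset) (J : forall a : obj A, qrel R X (dobj D a)) :
  is_qset_limit J ->
  is_qposet (qbigmeet (fun a : obj A => qcomp (qdag (J a)) (qcomp (drel D a) (J a)))) /\
  is_qpos_limit (qbigmeet (fun a : obj A => qcomp (qdag (J a)) (qcomp (drel D a) (J a)))) J.
Proof.
move=> Jlim; split.
- exact: limit_order_poset Jlim.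
- exact: limit_order_limit Jlim.
Qed.
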